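(* Let $G$ be a permutational digraph and $n\in\mathbb{N}$ (with $n\ge 0$). Then $G^{[0,n]}$ is congruence $(2n+2)$-permutable but not congruence $(2n+1)$-permutable.
   Context: Digraphs are finite and loopless. A digraph $G=(V,E)$ is permutational if it is a disjoint union of directed cycles, i.e. $E$ is (the graph of) a permutation of $V$ without fixed points. For integers $0\le j$, $G^{[0,j]}$ is the digraph on $V\cup\{1,\dots,j\}$ (disjoint) with edges: $u\to w$ for integers $1\le u<w\le j$; the edges of $E$; $v\to u$ for every $v\in V$ and $u\in\{1,\dots,j\}$. A polymorphism is a map $f:V^k\to V$ with $(f(a_1,\dots,a_k),f(b_1,\dots,b_k))\in E$ whenever all $(a_i,b_i)\in E$. A digraph is congruence $m$-permutable if it has ternary polymorphisms $p_0,\dots,p_m$ with $p_0(x,y,z)=x$, $p_i(x,x,y)=p_{i+1}(x,y,y)$ for $0\le i<m$, and $p_m(x,y,z)=z$, for all vertices. *)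

From mathcomp Require Import all_boot all_fingroup.
Set Implicit Arguments. Unset Strict Implicit. Unset Printing Implicit Defensive.

Definition permutational (V : finType) (E : rel V) : Prop :=
  exists s : {perm V}, (forall x, s x != x) /\ (forall x y, E x y = (s x == y)).

(* G^{[0,j]}: vertices V + 'I_j, where the ordinal i : 'I_j stands for the
   integer i+1 in {1,...,j}. *)
Definition ext_edge (V : finType) (E : rel V) (j : nat) : rel (V + 'I_j)%type :=
  fun a b =>
    match a, b with
    | inr u, inr w => (u < w)%N
    | inl u, inl w => E u w
    | inl _, inr _ => true
    | inr _, inl _ => false
    end.

Arguments ext_edge [V] E j.

Definition polymorphism3 (W : Type) (e : rel W) (f : W -> W -> W -> W) : Prop :=
  forall a1 b1 a2 b2 a3 b3, e a1 b1 -> e a2 b2 -> e a3 b3 ->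
    e (f a1 a2 a3) (f b1 b2 b3).

Definition cong_perm (W : Type) (e : rel W) (m : nat) : Prop :=
  exists p : nat -> W -> W -> W -> W,
    (forall i, (i <= m)%N -> polymorphism3 e (p i)) /\
    (forall x y z, p 0%N x y z = x) /\
    (forall i, (i < m)%N -> forall x y, p i x x y = p i.+1 x y y) /\
    (forall x y z, p m x y z = z).

(* Grade the vertices of G^[0,n] by level: 0 on V and j on the integer j.
   Every edge strictly raises the level, except the edges of G inside level 0.
   Hence an operation returning its argument of highest level, except on a
   down-closed set of level triples where it agrees with some edge-preserving
   operation, is a polymorphism.  For i <= n, p_i is the first projection as
   long as the last two arguments lie in the box [0, n-i]^2 or both on level
   n-i+1; p_(n+1) is the Maltsev operation of the permutation on level 0; and
   p_(n+2+j) mirrors p_(n-j) with the third projection.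

   Conversely, since the only in-neighbour of s u is u, an induction along a
   chain gives p_k(u, a, b) = u whenever a and b have level at most n-k, for
   all k <= n.  For a chain of length 2n+1 this, applied to the chain and to
   its reverse, yields v = p_n(v, v, s v) = p_(n+1)(v, s v, s v) = s v,
   contradicting fixed-point-freeness. *)

From mathcomp Require Import all_boot all_fingroup zify.
Set Implicit Arguments. Unset Strict Implicit. Unset Printing Implicit Defensive.

Definition maltsev (T : eqType) (x y z : T) : T := if x == y then z else x.

Lemma maltsev_xxy (T : eqType) (x y : T) : maltsev x x y = y.
Proof. by rewrite /maltsev eqxx. Qed.

Lemma maltsev_xyy (T : eqType) (x y : T) : maltsev x y y = x.
Proof. by rewrite /maltsev; case: eqP. Qed.

Lemma maltsev_polymorphism (V : finType) (E : rel V) :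
  permutational E -> polymorphism3 E (@maltsev V).
Proof.
case=> s [_ Es] a1 b1 a2 b2 a3 b3; rewrite !Es => /eqP<- /eqP<- /eqP<-.
by rewrite /maltsev (inj_eq perm_inj); case: ifP.
Qed.

Section Chains.
Variables (W : Type) (e : rel W).

Definition is_chain (m : nat) (p : nat -> W -> W -> W -> W) : Prop :=
  (forall i, i <= m -> polymorphism3 e (p i)) /\
  (forall x y z, p 0 x y z = x) /\
  (forall i, i < m -> forall x y, p i x x y = p i.+1 x y y) /\
  (forall x y z, p m x y z = z).

Definition rev_chain (m : nat) (p : nat -> W -> W -> W -> W) i x y z :=
  p (m - i) z y x.

Lemma rev_is_chain m p : is_chain m p -> is_chain m (rev_chain m p).
Proof.
case=> poly [p0 [step pm]]; split; [|split; [|split]]; rewrite /rev_chain.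
- by move=> i _ a1 b1 a2 b2 a3 b3 e1 e2 e3; apply: poly => //; exact: leq_subr.
- by move=> x y z; rewrite subn0 pm.
- move=> i lt_im x y; have -> : m - i = (m - i.+1).+1 by lia.
  by rewrite step //; lia.
- by move=> x y z; rewrite subnn p0.
Qed.

End Chains.

Section Layers.
Variables (V : finType) (E : rel V) (n : nat).
Local Notation W := (V + 'I_n)%type.
Local Notation e := (ext_edge E n).

Definition level (w : W) : nat := if w is inr j then j.+1 else 0.

Lemma level_le (w : W) : level w <= n.
Proof. by case: w => //= j; exact: ltn_ord. Qed.

Lemma level_inj (x y : W) : 0 < level x -> level x = level y -> x = y.
Proof. by case: x => [u|u]; case: y => [w|w] //= _ [] /val_inj ->. Qed.

Definition level_step (l m : nat) : Prop := l < m \/ l = 0 /\ m = 0.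

Lemma edge_level (x y : W) : e x y -> level_step (level x) (level y).
Proof.
by rewrite /level_step; case: x => [u|u]; case: y => [w|w] //= H; [right|left|left].
Qed.

Lemma edge_to_positive (x y : W) : 0 < level y -> e x y = (level x < level y).
Proof. by case: x => [u|u]; case: y => [w|w]. Qed.

Lemma edge_to_bottom (x : W) (u : V) :
  e x (inl u) -> exists2 v, x = inl v & E v u.
Proof. by case: x => [v|v] //= Evu; exists v. Qed.

Definition maxl3 (a b c : W) : W :=
  if (level b <= level a) && (level c <= level a) then a
  else if level c <= level b then b else c.

Definition maxl2 (x y : W) : W := if level y <= level x then x else y.

Lemma level_maxl3 (a b c : W) :
  level (maxl3 a b c) = maxn (level a) (maxn (level b) (level c)).
Proof.
by rewrite /maxl3; case: ifP => /andP; [case=> ??|move=> ?; case: ifP]; lia.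
Qed.

Lemma maxl3_xxy (x y : W) : maxl3 x x y = maxl2 x y.
Proof. by rewrite /maxl3 /maxl2 leqnn /=; case: ifP => // ->. Qed.

Lemma maxl3_xyy (x y : W) : maxl3 x y y = maxl2 x y.
Proof. by rewrite /maxl3 /maxl2 andbb leqnn; case: ifP. Qed.

Definition patch (cond : nat -> nat -> nat -> bool) (g : W -> W -> W -> W)
    (a b c : W) : W :=
  if cond (level a) (level b) (level c) then g a b c else maxl3 a b c.

Lemma patch_polymorphism (cond : nat -> nat -> nat -> bool)
    (g : W -> W -> W -> W) :
  (forall l1 l2 l3 m1 m2 m3, level_step l1 m1 -> level_step l2 m2 ->
     level_step l3 m3 -> cond m1 m2 m3 -> cond l1 l2 l3) ->
  cond 0 0 0 ->
  (forall a1 b1 a2 b2 a3 b3, e a1 b1 -> e a2 b2 -> e a3 b3 ->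
     cond (level b1) (level b2) (level b3) -> e (g a1 a2 a3) (g b1 b2 b3)) ->
  (forall a b c, level (g a b c) <= maxn (level a) (maxn (level b) (level c))) ->
  polymorphism3 e (patch cond g).
Proof.
move=> cond_down cond0 g_edge g_level a1 b1 a2 b2 a3 b3 e1 e2 e3.
have s1 := edge_level e1; have s2 := edge_level e2; have s3 := edge_level e3.
rewrite /patch; case cb: (cond (level b1) (level b2) (level b3)).
  by rewrite (cond_down _ _ _ _ _ _ s1 s2 s3 cb); exact: g_edge.
have max_b : 0 < maxn (level b1) (maxn (level b2) (level b3)).
  case: posnP => // max0; move: cb.
  have [-> [-> ->]] : level b1 = 0 /\ level b2 = 0 /\ level b3 = 0 by lia.
  by rewrite cond0.
have max_lt : maxn (level a1) (maxn (level a2) (level a3))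
              < maxn (level b1) (maxn (level b2) (level b3)).
  by move: s1 s2 s3 max_b; rewrite /level_step; lia.
rewrite edge_to_positive level_maxl3 //.
case: ifP => _; last by rewrite level_maxl3.
exact: leq_ltn_trans (g_level _ _ _) max_lt.
Qed.

Definition in_box (c l l' : nat) : bool :=
  (l <= c) && (l' <= c) || (l == c.+1) && (l' == c.+1).

Lemma in_box_down c l l' m m' :
  level_step l m -> level_step l' m' -> in_box c m m' -> in_box c l l'.
Proof. by rewrite /level_step /in_box; lia. Qed.

Definition left_op (c : nat) : W -> W -> W -> W :=
  patch (fun _ l2 l3 => in_box c l2 l3) (fun a _ _ => a).

Definition right_op (c : nat) : W -> W -> W -> W :=
  patch (fun l1 l2 _ => in_box c l1 l2) (fun _ _ a => a).

Definition maltsev_lift (a b c : W) : W :=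
  if (a, b, c) is (inl x, inl y, inl z) then inl (maltsev x y z) else a.

Definition middle_op : W -> W -> W -> W :=
  patch (fun l1 l2 l3 => maxn l1 (maxn l2 l3) == 0) maltsev_lift.

Lemma left_op_polymorphism c : polymorphism3 e (left_op c).
Proof.
apply: patch_polymorphism => //.
- by move=> l1 l2 l3 m1 m2 m3 _; exact: in_box_down.
- by move=> a b c'; rewrite leq_maxl.
Qed.

Lemma right_op_polymorphism c : polymorphism3 e (right_op c).
Proof.
apply: patch_polymorphism => //.
- by move=> l1 l2 l3 m1 m2 m3 s1 s2 _; exact: in_box_down.
- by move=> a b c'; lia.
Qed.

Lemma middle_op_polymorphism : permutational E -> polymorphism3 e middle_op.
Proof.
move=> permE; apply: patch_polymorphism => //.
- by move=> l1 l2 l3 m1 m2 m3; rewrite /level_step; lia.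
- move=> a1 [y1|y1] a2 [y2|y2] a3 [y3|y3] + + + /= b_bottom; try lia.
  move=> /edge_to_bottom [x1 -> E1] /edge_to_bottom [x2 -> E2].
  move=> /edge_to_bottom [x3 -> E3]; exact: maltsev_polymorphism.
- by move=> [a|a] [b|b] [c|c] /=; lia.
Qed.

Lemma left_op_step c (x y : W) : left_op c.+1 x x y = left_op c x y y.
Proof.
rewrite /left_op /patch maxl3_xxy maxl3_xyy /maxl2 /in_box.
by do 3 case: ifP => //; lia.
Qed.

Lemma right_op_step c (x y : W) : right_op c x x y = right_op c.+1 x y y.
Proof.
rewrite /right_op /patch maxl3_xxy maxl3_xyy /maxl2 /in_box.
do 3 case: ifP => //; try lia.
(* Left: x and y both on level c+2, where a level holds a single vertex. *)
by move=> box _ x_high; apply: level_inj; lia.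
Qed.

Lemma left_op_middle (x y : W) : left_op 0 x x y = middle_op x y y.
Proof.
rewrite /left_op /middle_op /patch maxl3_xxy maxl3_xyy /maxl2.
rewrite /in_box /maltsev_lift.
case: x => [x|x]; case: y => [y|y] /=; rewrite ?maltsev_xyy //.
all: by repeat case: ifP => //; lia.
Qed.

Lemma middle_right_op (x y : W) : middle_op x x y = right_op 0 x y y.
Proof.
rewrite /right_op /middle_op /patch maxl3_xxy maxl3_xyy /maxl2.
rewrite /in_box /maltsev_lift.
case: x => [x|x]; case: y => [y|y] /=; rewrite ?maltsev_xxy //.
all: repeat case: ifP => //; try lia.
by move=> tie _ _; apply: level_inj => /=; lia.
Qed.

Lemma left_op_top (x y z : W) : left_op n x y z = x.
Proof. by rewrite /left_op /patch /in_box !level_le. Qed.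

Lemma right_op_top (x y z : W) : right_op n x y z = z.
Proof. by rewrite /right_op /patch /in_box !level_le. Qed.

Definition layered_chain (i : nat) : W -> W -> W -> W :=
  if i <= n then left_op (n - i)
  else if i == n.+1 then middle_op else right_op (i - n.+2).

Lemma layered_chain_is_chain :
  permutational E -> is_chain e (2 * n + 2) layered_chain.
Proof.
move=> permE; rewrite /layered_chain; split; [|split; [|split]].
- move=> i _; case: ifP => _; first exact: left_op_polymorphism.
  case: ifP => _; [exact: middle_op_polymorphism | exact: right_op_polymorphism].
- by move=> x y z; rewrite leq0n subn0 left_op_top.
- move=> i lt_i x y; case: (ltngtP i n) => [lt_in|gt_in|->].
  + have -> : n - i = (n - i.+1).+1 by lia.
    exact: left_op_step.
  + case: (eqVneq i n.+1) => [->|ne_i].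
      by rewrite gtn_eqF // subnn middle_right_op.
    have -> : (i.+1 == n.+1) = false by lia.
    have -> : i.+1 - n.+2 = (i - n.+2).+1 by lia.
    exact: right_op_step.
  + by rewrite eqxx subnn left_op_middle.
- move=> x y z; have -> : (2 * n + 2 <= n) = false by lia.
  have -> : (2 * n + 2 == n.+1) = false by lia.
  have -> : 2 * n + 2 - n.+2 = n by lia.
  by rewrite right_op_top.
Qed.

Lemma chain_fixes_bottom m p :
  permutational E -> n <= m -> is_chain e m p ->
  forall k u (a b : W), k <= n -> level a <= n - k -> level b <= n - k ->
  p k (inl u) a b = inl u.
Proof.
case=> s [_ Es] le_nm [poly [p0 [step _]]].
have pred_unique w u : e w (inl (s u)) -> w = inl u.
  by case/edge_to_bottom=> v -> /=; rewrite Es => /eqP /perm_inj ->.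
elim=> [|k IH] u a b le_kn la lb; first exact: p0.
have lt_n : n - k.+1 < n by lia.
pose t : W := inr (Ordinal lt_n).
have pt : p k.+1 (inl (s u)) t t = inl (s u) by rewrite -step ?IH //=; lia.
apply: pred_unique; rewrite -pt; apply: poly; first by lia.
- by rewrite /= Es.
- by rewrite edge_to_positive /=; lia.
- by rewrite edge_to_positive /=; lia.
Qed.

Lemma not_cong_perm_odd :
  0 < #|V| -> permutational E -> ~ cong_perm e (2 * n + 1).
Proof.
move=> /card_gt0P [v _] permE [p chain]; have [s [s_fpf _]] := permE.
have lt_n : n < 2 * n + 1 by lia.
have p_n := chain_fixes_bottom permE (ltnW lt_n) chain v (a := inl v)
  (b := inl (s v)) (leqnn n) (leq0n _) (leq0n _).
have q_n := chain_fixes_bottom permE (ltnW lt_n) (rev_is_chain chain) (s v)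
  (a := inl (s v)) (b := inl v) (leqnn n) (leq0n _) (leq0n _).
rewrite /rev_chain (_ : 2 * n + 1 - n = n.+1) in q_n; last by lia.
case: chain => _ [_ [step _]].
have := step n lt_n (inl v) (inl (s v)).
by rewrite p_n q_n => -[v_sv]; move: (s_fpf v); rewrite -v_sv eqxx.
Qed.

End Layers.

Theorem proposition6p3 (V : finType) (E : rel V) (hV : (0 < #|V|)%N)
    (hG : permutational E) (n : nat) :
  cong_perm (ext_edge E n) (2 * n + 2) /\ ~ cong_perm (ext_edge E n) (2 * n + 1).
Proof.
split; last exact: not_cong_perm_odd hV hG.
by exists (@layered_chain V n); exact: layered_chain_is_chain.
Qed.
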